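(* For each $k\ge 1$ there is a monic polynomial $P_k$ of degree $k$ (with rational coefficients) such that for all $n\ge 2$ the number of $k$-chains of $(\mathsf{Tr}(n),\preccurlyeq)$ equals $$\sum_{i=0}^{k}\mathfrak{z}_i(n,k)=(k+1)^{\,n-(k+1)}\,P_k(n).$$
   Context: A triword of size $n$ is a word $u=u_1\cdots u_n$ with $u_i\in\{0,1,2\}$, $u_1\ne 2$, and such that $u_i=0$ implies $u_j\neq 1$ for all $j>i$; $\mathsf{Tr}(n)$ is their set, ordered componentwise ($u\preccurlyeq v$ iff $u_i\le v_i$ for all $i$). A $k$-chain of $\mathsf{Tr}(n)$ is a sequence $[u^{(1)},\dots,u^{(k)}]$ of triwords of size $n$ with $u^{(1)}\preccurlyeq\cdots\preccurlyeq u^{(k)}$ (repetitions allowed). For $i\in[0,k]$, $\mathfrak{z}_i(n,k)$ is the number of $k$-chains in which exactly the last $i$ words $u^{(k-i+1)},\dots,u^{(k)}$ do not contain the letter $0$ (and the first $k-i$ do). *)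

From HB Require Import structures.
From mathcomp Require Import all_boot all_order all_algebra.
Set Implicit Arguments. Unset Strict Implicit. Unset Printing Implicit Defensive.
Import Order.TTheory GRing.Theory Num.Theory.

(* Words of size n over the alphabet {0,1,2}; position i (0-based) is u_{i+1}. *)
Definition word (n : nat) := {ffun 'I_n -> 'I_3}.

Definition triword n (u : word n) : bool :=
  [forall i : 'I_n, (val i == 0%N) ==> (val (u i) != 2%N)] &&
  [forall i : 'I_n, forall j : 'I_n,
      ((i < j)%N && (val (u i) == 0%N)) ==> (val (u j) != 1%N)].

Definition word_le n (u v : word n) : bool :=
  [forall i : 'I_n, (val (u i) <= val (v i))%N].

Definition has0 n (u : word n) : bool := [exists i : 'I_n, val (u i) == 0%N].

(* A k-chain [u^(1),...,u^(k)] is c : 'I_k -> word n (c j = u^(j+1)),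
   all triwords, weakly increasing (consecutive comparisons suffice by
   transitivity; we require all pairs i <= j to be literal). *)
Definition is_chain n k (c : {ffun 'I_k -> word n}) : bool :=
  [forall j : 'I_k, triword (c j)] &&
  [forall i : 'I_k, forall j : 'I_k, (i <= j)%N ==> word_le (c i) (c j)].

Definition nchains (n k : nat) : nat :=
  #|[pred c : {ffun 'I_k -> word n} | is_chain c]|.

Definition zeta (n k i : nat) : nat :=
  #|[pred c : {ffun 'I_k -> word n} |
      is_chain c && [forall j : 'I_k, has0 (c j) == (val j < k - i)%N]]|.

(* Transposing a k-chain of triwords of size n gives n columns in {0,1,2}^k.
   Each column is weakly increasing, i.e. of the form 0^x 1^(y-x) 2^(k-y);
   the first column avoids 2, and a column may not carry a 1 in a row where
   an earlier column carries a 0.  As zeros fill a prefix of every column,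
   the rows that have already met a 0 form a prefix [0, M), so the columns
   are read by an automaton with states M = 0..k.  Its transfer matrix is
   (k+1) I + N with N strictly upper triangular and superdiagonal
   k, k-1, ..., 1.  Expanding ((k+1) I + N)^(n-1) binomially, the number of
   chains is sum_(j <= k) C(n-1, j) (k+1)^(n-1-j) c_j, where c_j is the sum of
   the entries of N^j and c_k = k!; this is (k+1)^(n-k-1) times a polynomial
   in n of degree k with leading coefficient c_k / k! = 1.  The z_i simply
   sort the chains by the number of their words that contain a 0. *)

From mathcomp Require Import all_boot all_algebra.
From mathcomp Require Import zify ring.
Set Implicit Arguments. Unset Strict Implicit. Unset Printing Implicit Defensive.
Import GRing.Theory Num.Theory.

Section FfunCons.
Variables (T : finType) (m : nat).

Definition ffun_behead (f : {ffun 'I_m.+1 -> T}) : {ffun 'I_m -> T} :=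
  [ffun p => f (lift ord0 p)].

Definition ffun_cons (a : T) (t : {ffun 'I_m -> T}) : {ffun 'I_m.+1 -> T} :=
  [ffun p => if unlift ord0 p is Some p' then t p' else a].

Lemma ffun_cons0 a t : ffun_cons a t ord0 = a.
Proof. by rewrite ffunE unlift_none. Qed.

Lemma ffun_behead_cons a t : ffun_behead (ffun_cons a t) = t.
Proof. by apply/ffunP=> p; rewrite !ffunE liftK. Qed.

Lemma ffun_cons_bij : bijective (fun x : T * {ffun 'I_m -> T} => ffun_cons x.1 x.2).
Proof.
exists (fun f : {ffun 'I_m.+1 -> T} => (f ord0, ffun_behead f)) => [[a t]|f].
  by rewrite /= ffun_cons0 ffun_behead_cons.
apply/ffunP=> p; rewrite ffunE.
by case: (unliftP ord0 p) => [p'|] -> //=; rewrite ffunE.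
Qed.

Lemma card_ffun_cons (P : T -> {ffun 'I_m -> T} -> bool) :
  #|[pred f : {ffun 'I_m.+1 -> T} | P (f ord0) (ffun_behead f)]| =
  \sum_a #|[pred t | P a t]|.
Proof.
rewrite -sum1_card (reindex _ (onW_bij _ ffun_cons_bij)) /=.
rewrite (eq_bigl (fun x => P x.1 x.2)) => [|[a t]]; last first.
  by rewrite inE ffun_cons0 ffun_behead_cons.
rewrite -(pair_big_dep xpredT P (fun _ _ => 1)) /=.
by apply: eq_bigr => a _; rewrite sum1_card.
Qed.

End FfunCons.

Lemma forall_ordS n (P : pred 'I_n.+1) :
  [forall i, P i] = P ord0 && [forall i : 'I_n, P (lift ord0 i)].
Proof.
apply/forallP/andP => [H|[P0 /forallP PS] i]; first by split; [|apply/forallP=> i]; apply: H.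
by case: (unliftP ord0 i) => [j|] ->.
Qed.

Lemma exists_ordS n (P : pred 'I_n.+1) :
  [exists i, P i] = P ord0 || [exists i : 'I_n, P (lift ord0 i)].
Proof.
apply: negb_inj; rewrite negb_or !negb_exists forall_ordS.
by congr (_ && _); apply: eq_forallb => i.
Qed.

Lemma card_ord_gt n t : #|[pred i : 'I_n | t < i]| = n - t.+1.
Proof.
rewrite -sum1_card (eq_bigl (fun i : 'I_n => true && (t.+1 <= i))) //.
by rewrite -(big_geq_mkord _ _ xpredT (fun _ => 1)) sum_nat_const_nat muln1.
Qed.

Definition prefix_size k (D : pred 'I_k) : nat := \max_(i | D i) i.+1.

Lemma prefix_size_le k (D : pred 'I_k) : prefix_size D <= k.
Proof. by apply/bigmax_leqP => i _; exact: ltn_ord. Qed.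

Lemma mem_prefix k (D : pred 'I_k) :
  (forall i j : 'I_k, j <= i -> D i -> D j) -> forall j, D j = (j < prefix_size D).
Proof.
move=> Ddown j; apply/idP/idP => [Dj|].
  exact: (leq_bigmax_cond (F := fun i : 'I_k => i.+1)).
apply: contraLR => nDj; rewrite -leqNgt; apply/bigmax_leqP => i Di.
by rewrite ltnNge; apply: contra nDj => /Ddown; apply.
Qed.

Lemma prefix_size_ltn k x : x <= k -> prefix_size (fun i : 'I_k => i < x) = x.
Proof.
move=> xk; apply/eqP; rewrite eqn_leq; apply/andP; split; first exact/bigmax_leqP.
case: x xk => // x xk.
exact: (@leq_bigmax_cond _ _ (fun i : 'I_k => i.+1) (Ordinal xk)).
Qed.

Lemma prefix_size_sub k (D D' : pred 'I_k) :
  (forall i, D i -> D' i) -> prefix_size D <= prefix_size D'.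
Proof.
move=> DD'; apply/bigmax_leqP => i Di.
exact: (leq_bigmax_cond (F := fun i : 'I_k => i.+1)) (DD' i Di).
Qed.

Section TransferMatrix.
Variables (l : nat) (A : finType) (step : 'I_l -> A -> option 'I_l).

Fixpoint accepts m : 'I_l -> {ffun 'I_m -> A} -> bool :=
  if m is m'.+1 then fun s t =>
    if step s (t ord0) is Some s' then accepts s' (ffun_behead t) else false
  else fun _ _ => true.

Definition naccepted m s := #|[pred t : {ffun 'I_m -> A} | accepts s t]|.

Definition ntransitions s s' := #|[pred a | step s a == Some s']|.

Lemma naccepted0 s : naccepted 0 s = 1.
Proof. by rewrite /naccepted (eq_card (B := predT)) // card_ffun card_ord. Qed.

Lemma nacceptedS m s :
  naccepted m.+1 s = \sum_s' ntransitions s s' * naccepted m s'.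
Proof.
rewrite /naccepted (card_ffun_cons (fun a t =>
  if step s a is Some s' then accepts s' t else false)).
under [RHS]eq_bigr do rewrite /ntransitions -sum1_card big_distrl /=.
rewrite (exchange_big_dep xpredT) //=; apply: eq_bigr => a _.
case E: (step s a) => [s'|].
  by rewrite (big_pred1 s') ?mul1n // => s''; rewrite inE E.
by rewrite (eq_card0 (fun _ => erefl)) big1 // => s''; rewrite inE E.
Qed.

Local Open Scope ring_scope.

Definition transfer_mx (R : pzSemiRingType) : 'M[R]_l :=
  \matrix_(s, s') (ntransitions s s')%:R.

Lemma naccepted_transfer (R : pzSemiRingType) m s :
  (naccepted m s)%:R = \sum_s' (transfer_mx R ^+ m) s s'.
Proof.
elim: m s => [|m IHm] s.
  rewrite naccepted0 expr0 (bigD1 s) //= big1 => [|s' s's]; rewrite !mxE ?eqxx ?addr0 //.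
  by rewrite eq_sym (negbTE s's).
rewrite nacceptedS natr_sum exprS; under [RHS]eq_bigr do rewrite -mulmxE mxE.
rewrite exchange_big /=; apply: eq_bigr => s' _.
by rewrite -mulr_sumr -IHm natrM mxE.
Qed.

End TransferMatrix.

Section EntrySum.
Local Open Scope ring_scope.

Lemma eq_sum_ord_trunc (R : nmodType) (F : nat -> R) a b :
  (forall j, (a <= j)%N -> F j = 0) -> (forall j, (b <= j)%N -> F j = 0) ->
  \sum_(j < a) F j = \sum_(j < b) F j.
Proof.
wlog ab : a b / (a <= b)%N => [wlog Fa Fb|Fa _].
  by case: (leqP a b) => [|/ltnW] ab; [|symmetry]; apply: wlog.
rewrite (big_ord_widen _ F ab) big_mkcond; apply: eq_bigr => j _.
by case: ifP => // /negbT; rewrite -leqNgt => /Fa.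
Qed.

Definition entry_sum (R : nmodType) m n (A : 'M[R]_(m, n)) := \sum_i \sum_j A i j.

Lemma entry_sum_comb (R : pzSemiRingType) m n (I : finType) (c : I -> R)
    (A : I -> 'M[R]_(m, n)) :
  entry_sum (\sum_i c i *: A i) = \sum_i c i * entry_sum (A i).
Proof.
rewrite /entry_sum; symmetry.
under eq_bigr do rewrite mulr_sumr.
rewrite exchange_big; apply: eq_bigr => x _.
under eq_bigr do rewrite mulr_sumr.
rewrite exchange_big; apply: eq_bigr => y _.
by rewrite summxE; apply: eq_bigr => i _; rewrite mxE.
Qed.

End EntrySum.

Section StrictlyUpperTriangular.
Local Open Scope ring_scope.
Variables (R : pzSemiRingType) (l : nat) (N : 'M[R]_l.+1).
Hypothesis N_strict : forall i j : 'I_l.+1, (j <= i)%N -> N i j = 0.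

Lemma strict_upper_expr_low j (i i' : 'I_l.+1) : (i' < i + j)%N -> (N ^+ j) i i' = 0.
Proof.
elim: j i' => [|j IHj] i' lt_i'.
  by rewrite expr0 mxE; case: eqP => // ii'; rewrite ii' addn0 ltnn in lt_i'.
rewrite exprSr -mulmxE mxE big1 // => p _.
case: (ltnP p (i + j)) => [/IHj -> | le_p]; first by rewrite mul0r.
by rewrite N_strict ?mulr0 //; lia.
Qed.

Lemma strict_upper_nilpotent j : (l < j)%N -> N ^+ j = 0.
Proof.
move=> lj; apply/matrixP => i i'; rewrite mxE strict_upper_expr_low //.
by have := ltn_ord i'; lia.
Qed.

Lemma strict_upper_expr_diag j (i i' : 'I_l.+1) : (i + j)%N = i' ->
  (N ^+ j) i i' = \prod_(t < j) N (inord (i + t)) (inord (i + t).+1).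
Proof.
elim: j i' => [|j IHj] i' ij.
  have -> : i = i' by apply: val_inj; rewrite /= -ij addn0.
  by rewrite expr0 big_ord0 mxE eqxx.
have lt_i' := ltn_ord i'; have lt_ij : (i + j < l.+1)%N by lia.
rewrite exprSr -mulmxE mxE (bigD1 (Ordinal lt_ij)) //= big1 ?addr0 => [|p ne_p].
  rewrite (IHj (Ordinal lt_ij)) // big_ord_recr /=; congr (_ * N _ _); apply: ord_inj.
    by rewrite inordK.
  by rewrite inordK; lia.
case: (ltngtP p (i + j)) => [/strict_upper_expr_low -> | lt_p |]; first by rewrite mul0r.
  by rewrite N_strict ?mulr0 //; lia.
by move=> p_ij; rewrite (_ : p = Ordinal lt_ij) ?eqxx in ne_p => //; apply: val_inj.
Qed.

Lemma strict_upper_entry_sum_top :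
  entry_sum (N ^+ l) = \prod_(t < l) N (inord t) (inord t.+1).
Proof.
have low i i' : (i != ord0) || (i' != ord_max) -> (N ^+ l) i i' = 0.
  move=> ne; apply: strict_upper_expr_low.
  have := ltn_ord i; have := ltn_ord i'.
  by case/orP: ne => ne; [have : i != 0 :> nat by apply: contra_neq ne => ?; exact: ord_inj|
    have : i' != l :> nat by apply: contra_neq ne => ?; exact: ord_inj]; lia.
rewrite /entry_sum (bigD1 ord0) //= [X in _ + X]big1 ?addr0 => [|i ne_i]; last first.
  by apply: big1 => i' _; rewrite low ?ne_i.
rewrite (bigD1 ord_max) //= big1 ?addr0 => [|i' ne_i']; last by rewrite low ?ne_i' ?orbT.
by rewrite strict_upper_expr_diag ?add0n //; apply: eq_bigr => t _; rewrite add0n.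
Qed.

End StrictlyUpperTriangular.

Lemma expfz_shift (F : fieldType) (x : F) k m j : x != 0%R -> j <= m -> j <= k ->
  (x ^ (m.+1%:Z - k.+1%:Z) * x ^+ (k - j) = x ^+ (m - j))%R.
Proof. by move=> x0 jm jk; rewrite !exprnP -expfzDr //; congr (_ ^ _)%R; lia. Qed.

Section Columns.
Variable k : nat.

Definition column := {ffun 'I_k -> 'I_3}.

Definition col_mono (a : column) :=
  [forall i : 'I_k, forall j : 'I_k, (i <= j) ==> (a i <= a j)].
Definition col_no2 (a : column) := [forall j, a j != 2 :> nat].
Definition level_len (a : column) c := prefix_size (fun j => a j <= c).
Notation zero_len a := (level_len a 0).

Definition col_of (x y : nat) : column :=
  [ffun j : 'I_k => inord (if j < x then 0 else if j < y then 1 else 2)].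

Lemma col_ofE x y j : col_of x y j = (if j < x then 0 else if j < y then 1 else 2) :> nat.
Proof. by rewrite ffunE inordK //; case: ifP => _; [|case: ifP]. Qed.

Lemma col_mono_of x y : col_mono (col_of x y).
Proof.
apply/forallP => i; apply/forallP => j; apply/implyP => ij; rewrite !col_ofE.
by case: (ltnP i x); case: (ltnP i y); case: (ltnP j x); case: (ltnP j y); lia.
Qed.

Lemma col_no2_of x y : x <= y <= k -> col_no2 (col_of x y) = (y == k).
Proof.
case/andP=> xy yk; apply/forallP/eqP => [no2|-> j]; last first.
  by rewrite col_ofE ltn_ord; case: ifP.
apply/eqP; rewrite eqn_leq yk leqNgt; apply/negP => lt_yk.
by have := no2 (Ordinal lt_yk); rewrite col_ofE /= ltnn; case: ltnP => //; lia.
Qed.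

Lemma level_len_of x y c : x <= y <= k -> c < 2 ->
  level_len (col_of x y) c = if c == 0 then x else y.
Proof.
case/andP=> xy yk c2; rewrite -[RHS](@prefix_size_ltn k); last by case: (c == 0); lia.
by apply: eq_bigl => j; rewrite col_ofE; case: ltnP; case: ltnP; case: (c == 0) / eqP; lia.
Qed.

Lemma mem_level_len a c : col_mono a -> forall j, (a j <= c) = (j < level_len a c).
Proof.
move=> amono; apply: mem_prefix => i j ji; apply: leq_trans.
by have /forallP/(_ i)/implyP := forallP amono j; apply.
Qed.

Lemma col_mono_shape a : col_mono a ->
  zero_len a <= level_len a 1 <= k /\ a = col_of (zero_len a) (level_len a 1).
Proof.
move=> amono; split; first by rewrite prefix_size_le andbT prefix_size_sub // => j /leqW.
apply/ffunP => j; apply: ord_inj; rewrite col_ofE -!mem_level_len //.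
by case: (a j) => [[|[|[|v]]] ?].
Qed.

(* The state [M] of the automaton records that rows [0, M) have already met
   a 0, hence may no longer carry a 1. *)
Definition admissible M (a : column) :=
  col_mono a && [forall j : 'I_k, (j < M) ==> (a j != 1 :> nat)].

Definition chain_step (M : 'I_k.+1) (a : column) : option 'I_k.+1 :=
  if admissible M a then Some (inord (maxn M (zero_len a))) else None.

Definition cols_good m M (t : {ffun 'I_m -> column}) :=
  [forall p, col_mono (t p)] &&
  [forall p : 'I_m, forall j : 'I_k,
     ((j < M) || [exists q : 'I_m, (q < p) && (t q j == 0 :> nat)]) ==>
     (t p j != 1 :> nat)].

Lemma admissible0 a : admissible 0 a = col_mono a.
Proof. by rewrite /admissible andbC; case: (boolP [forall j, _]) => // /forallP[]. Qed.

Lemma admissible_of M x y : x <= y <= k ->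
  admissible M (col_of x y) = (M <= x) || (x == y).
Proof.
case/andP=> xy yk; rewrite /admissible col_mono_of /=.
apply/forallP/idP => [ok|ok j]; last first.
  by apply/implyP => jM; rewrite col_ofE; case: ltnP => // ?; case: ltnP => // ?; lia.
apply/negPn/negP; rewrite negb_or -ltnNge => /andP[xM ne_xy].
have lt_xk : x < k by lia.
by have /implyP := ok (Ordinal lt_xk); rewrite col_ofE /= xM ltnn ifT //; lia.
Qed.

Lemma chain_step_of (M : 'I_k.+1) x y : x <= y <= k ->
  chain_step M (col_of x y) =
  if (M <= x) || (x == y) then Some (inord (maxn M x)) else None.
Proof.
by move=> xyk; rewrite /chain_step admissible_of // level_len_of //; case/andP: xyk; lia.
Qed.

Lemma chain_step_ge (M M' : 'I_k.+1) a : chain_step M a = Some M' -> M <= M'.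
Proof.
rewrite /chain_step; case: ifP => // _ [<-].
by rewrite inordK ?leq_maxl // ltnS geq_max prefix_size_le -ltnS ltn_ord.
Qed.

Lemma cols_good_behead m M (t : {ffun 'I_m.+1 -> column}) :
  cols_good M t =
  admissible M (t ord0) && cols_good (maxn M (zero_len (t ord0))) (ffun_behead t).
Proof.
set a := t ord0.
have no_q0 j : [exists q : 'I_m.+1, (q < @ord0 m) && (t q j == 0 :> nat)] = false.
  by apply/existsP => -[].
rewrite /cols_good /admissible forall_ordS [X in _ && X]forall_ordS.
under [X in _ && (X && _)]eq_forallb => j do rewrite no_q0 orbF.
case: (boolP (col_mono a)) => //= amono; rewrite andbCA; congr [&& _, _ & _].
  by apply: eq_forallb => p; rewrite ffunE.
apply: eq_forallb => p; apply: eq_forallb => j.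
rewrite exists_ordS /= leq_max -mem_level_len // leqn0 -orbA !ffunE.
by congr ((_ || (_ || _)) ==> _); apply: eq_existsb => q; rewrite ffunE.
Qed.

Lemma accepts_chain_step m (M : 'I_k.+1) (t : {ffun 'I_m -> column}) :
  accepts chain_step M t = cols_good M t.
Proof.
elim: m M t => [|m IHm] M t /=; first by apply/esym/andP; split; apply/forallP => -[].
rewrite cols_good_behead /chain_step; case: admissible => //.
by rewrite IHm inordK // ltnS geq_max prefix_size_le andbT -ltnS.
Qed.

Lemma mono_no2_cols : [set a | col_mono a && col_no2 a] = [set col_of x k | x : 'I_k.+1].
Proof.
apply/setP => a; rewrite !inE; apply/andP/imsetP => [[/col_mono_shape[xyk ->]]|[x _ ->]].
  rewrite col_no2_of // => /eqP ->; exists (inord (zero_len a)) => //.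
  by rewrite inordK // ltnS prefix_size_le.
have xk : x <= k by rewrite -ltnS.
by rewrite col_no2_of ?xk ?leqnn //; split; [exact: col_mono_of|].
Qed.

Lemma chain_step_fixed_cols (M : 'I_k.+1) :
  [set a | chain_step M a == Some M] = [set col_of (minn M y) y | y : 'I_k.+1].
Proof.
have Mk := ltn_ord M.
apply/setP => a; rewrite !inE; apply/idP/imsetP => [|[y _ ->]].
  case: (boolP (col_mono a)) => [/col_mono_shape[xyk ->]|amono]; last first.
    by rewrite /chain_step /admissible (negbTE amono).
  move: xyk; set x := zero_len a; set y := level_len a 1 => xyk.
  rewrite chain_step_of //; case: ifP => // cond /eqP[] /(congr1 (@nat_of_ord _)).
  rewrite inordK => [maxM|]; last by lia.
  by exists (inord y); rewrite // inordK; [congr col_of|]; lia.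
have yk := ltn_ord y; rewrite chain_step_of ?ifT; try lia.
by apply/eqP; congr Some; apply: ord_inj; rewrite inordK; lia.
Qed.

Lemma chain_step_succ_cols t : t < k ->
  [set a | chain_step (inord t) a == Some (inord t.+1)] =
  [set col_of t.+1 y | y : 'I_k.+1 in [pred y : 'I_k.+1 | t < y]].
Proof.
move=> tk; apply/setP => a; rewrite !inE; apply/idP/imsetP => [|[y ty ->]].
  case: (boolP (col_mono a)) => [/col_mono_shape[xyk ->]|amono]; last first.
    by rewrite /chain_step /admissible (negbTE amono).
  move: xyk; set x := zero_len a; set y := level_len a 1 => xyk.
  rewrite chain_step_of //; case: ifP => // cond /eqP[] /(congr1 (@nat_of_ord _)).
  rewrite !inordK; [move=> maxt | lia..].
  exists (inord y); first by rewrite inE inordK; lia.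
  by rewrite inordK; [congr col_of|]; lia.
have yk := ltn_ord y; rewrite inE in ty.
rewrite chain_step_of; last by lia.
rewrite inordK; last by lia.
rewrite ifT; last by lia.
by apply/eqP; congr Some; apply: ord_inj; rewrite !inordK; lia.
Qed.

Lemma ntransitions_fixed M : ntransitions chain_step M M = k.+1.
Proof.
rewrite /ntransitions -cardsE chain_step_fixed_cols card_in_imset ?card_ord // => y y' _ _.
have yk := ltn_ord y; have y'k := ltn_ord y'.
by move/(congr1 (level_len^~ 1)); rewrite !level_len_of //=; [apply: ord_inj | lia..].
Qed.

Lemma ntransitions_succ t : t < k ->
  ntransitions chain_step (inord t) (inord t.+1) = k - t.
Proof.
move=> tk; rewrite /ntransitions -cardsE chain_step_succ_cols //.
rewrite card_in_imset ?card_ord_gt // => y y'; rewrite !inE => ty ty'.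
have yk := ltn_ord y; have y'k := ltn_ord y'.
by move/(congr1 (level_len^~ 1)); rewrite !level_len_of //=; [apply: ord_inj | lia..].
Qed.

Lemma ntransitions_lt (M M' : 'I_k.+1) : M' < M -> ntransitions chain_step M M' = 0.
Proof.
move=> lt_M'M; apply: eq_card0 => a; rewrite inE; apply/eqP => /chain_step_ge.
by rewrite leqNgt lt_M'M.
Qed.

Definition chain_of_cols n (t : {ffun 'I_n -> column}) : {ffun 'I_k -> word n} :=
  [ffun j => [ffun p => t p j]].

Lemma chain_of_cols_bij n : bijective (@chain_of_cols n).
Proof.
exists (fun c : {ffun 'I_k -> word n} => [ffun p => [ffun j => c j p]]) => x;
  by apply/ffunP => i; apply/ffunP => j; rewrite !ffunE.
Qed.

Lemma is_chain_cols m (t : {ffun 'I_m.+1 -> column}) :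
  is_chain (chain_of_cols t) = col_no2 (t ord0) && cols_good 0 t.
Proof.
rewrite /is_chain /cols_good /triword /word_le /col_no2.
apply/idP/idP.
- case/andP=> /forallP tri /forallP le; apply/and3P; split.
  + apply/forallP=> j; case/andP: (tri j) => /forallP/(_ ord0)/implyP/(_ isT).
    by rewrite !ffunE.
  + apply/forallP=> p; apply/forallP=> i; apply/forallP=> j; apply/implyP=> ij.
    by have /forallP/(_ p) := implyP (forallP (le i) j) ij; rewrite !ffunE.
  + apply/forallP=> p; apply/forallP=> j; apply/implyP => /existsP[q /andP[qp qj]].
    case/andP: (tri j) => _ /forallP/(_ q)/forallP/(_ p)/implyP; rewrite !ffunE; apply.
    by rewrite qp qj.
- case/and3P=> /forallP no2 /forallP mono /forallP good; apply/andP; split.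
  + apply/forallP=> j; apply/andP; split.
      apply/forallP=> i; apply/implyP=> /eqP i0.
      have -> : i = ord0 by exact: val_inj.
      by rewrite !ffunE; exact: no2.
    apply/forallP=> q; apply/forallP=> p; apply/implyP=> /andP[qp qj].
    have /forallP/(_ j)/implyP := good p; rewrite !ffunE; apply.
    by rewrite !ffunE in qj; apply/existsP; exists q; rewrite qp qj.
  + apply/forallP=> i; apply/forallP=> j; apply/implyP=> ij.
    apply/forallP=> p; rewrite !ffunE.
    by have /forallP/(_ i)/forallP/(_ j)/implyP := mono p; apply.
Qed.

Lemma nchains_naccepted m :
  nchains m.+1 k = \sum_(x : 'I_k.+1) naccepted chain_step m x.
Proof.
pose P a (t : {ffun 'I_m -> column}) :=
  [&& col_mono a, col_no2 a & accepts chain_step (inord (zero_len a)) t].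
have chainP t : is_chain (chain_of_cols t) = P (t ord0) (ffun_behead t).
  rewrite is_chain_cols cols_good_behead max0n admissible0 /P accepts_chain_step.
  by rewrite inordK ?ltnS ?prefix_size_le // andbCA.
rewrite /nchains -(on_card_preimset (onW_bij _ (@chain_of_cols_bij m.+1))).
rewrite (eq_card (B := [pred t : {ffun 'I_m.+1 -> column} | P (t ord0) (ffun_behead t)]))
  => [|t]; last first.
  by rewrite !inE /= chainP.
rewrite card_ffun_cons (bigID (fun a => col_mono a && col_no2 a)) /=.
rewrite [X in _ + X]big1 ?addn0 => [|a /negbTE bad]; last first.
  by apply: eq_card0 => t; rewrite inE /P andbA bad.
rewrite (eq_bigl (fun a => a \in [set a | col_mono a && col_no2 a])) => [|a]; last first.
  by rewrite inE.
have xk (x : 'I_k.+1) : x <= k <= k by rewrite leqnn andbT -ltnS.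
rewrite mono_no2_cols big_imset => [|x x' _ _]; last first.
  by move/(congr1 (level_len^~ 0)); rewrite !level_len_of //; apply: ord_inj.
apply: eq_bigr => x _; apply: eq_card => t.
by rewrite !inE /P col_mono_of col_no2_of // level_len_of // eqxx inord_val.
Qed.

End Columns.

Section ZeroWords.
Variables (n k : nat).

Definition zero_words (c : {ffun 'I_k -> word n}) := prefix_size (fun j => has0 (c j)).

Lemma chain_zeta_index (c : {ffun 'I_k -> word n}) (i : 'I_k.+1) : is_chain c ->
  [forall j : 'I_k, has0 (c j) == (j < k - i)] = (i == k - zero_words c :> nat).
Proof.
case/andP=> _ /forallP le_c.
have down (a b : 'I_k) : b <= a -> has0 (c a) -> has0 (c b).
  move=> ba /existsP[p /eqP cp]; apply/existsP; exists p.
  by have /forallP/(_ p) := implyP (forallP (le_c b) a) ba; rewrite cp leqn0.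
have Lk := prefix_size_le (fun j => has0 (c j)); have ik : i <= k by rewrite -ltnS.
apply/forallP/eqP => [eq_L | -> j]; last by rewrite (mem_prefix down) subKn.
suff : zero_words c = k - i by lia.
rewrite -[RHS](prefix_size_ltn (leq_subr i k)); apply: eq_bigl => j.
exact: eqP (eq_L j).
Qed.

Lemma nchains_zeta : nchains n k = \sum_(i < k.+1) zeta n k i.
Proof.
rewrite /nchains -sum1_card (eq_bigr (fun c : {ffun 'I_k -> word n} =>
  \sum_(i < k.+1 | [forall j : 'I_k, has0 (c j) == (j < k - i)]) 1)) => [|c]; last first.
  rewrite inE => chain_c; rewrite (big_pred1 (inord (k - zero_words c))) // => i.
  by rewrite chain_zeta_index //= -(inj_eq (@ord_inj _)) inordK // ltnS leq_subr.
rewrite (exchange_big_dep xpredT) //=; apply: eq_bigr => i _.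
by rewrite sum1_card; apply: eq_card => c; rewrite !inE.
Qed.

End ZeroWords.

Local Open Scope ring_scope.

Definition chain_mx k : 'M[rat]_k.+1 := transfer_mx (@chain_step k) rat.
Definition chain_nil k : 'M[rat]_k.+1 := chain_mx k - k.+1%:R%:M.
Definition chain_coef k j : rat := entry_sum (chain_nil k ^+ j).

Lemma chain_nil_strict k (i j : 'I_k.+1) : (j <= i)%N -> chain_nil k i j = 0.
Proof.
rewrite leq_eqVlt !mxE => /orP[/eqP/ord_inj -> | lt_ji].
  by rewrite eqxx ntransitions_fixed subrr.
by rewrite ntransitions_lt // (gtn_eqF lt_ji : (i == j) = false) subrr.
Qed.

Lemma chain_nil_succ k t : (t < k)%N -> chain_nil k (inord t) (inord t.+1) = (k - t)%:R.
Proof.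
move=> tk; rewrite !mxE ntransitions_succ //.
suff -> : (inord t == inord t.+1 :> 'I_k.+1) = false by rewrite subr0.
by apply/eqP => /(congr1 (@nat_of_ord _)); rewrite !inordK; lia.
Qed.

Lemma chain_coef_top k : chain_coef k k = k`!%:R.
Proof.
rewrite /chain_coef strict_upper_entry_sum_top; last exact: chain_nil_strict.
rewrite -ffactnn ffact_prod natr_prod; apply: eq_bigr => t _.
exact: chain_nil_succ.
Qed.

Lemma chain_coef_gt k j : (k < j)%N -> chain_coef k j = 0.
Proof.
move=> kj; rewrite /chain_coef strict_upper_nilpotent //; last exact: chain_nil_strict.
by rewrite /entry_sum big1 // => i _; rewrite big1 // => i' _; rewrite mxE.
Qed.

Lemma nchains_binomial k m : (nchains m.+1 k)%:R =
  \sum_(j < k.+1) k.+1%:R ^+ (m - j) * 'C(m, j)%:R * chain_coef k j.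
Proof.
rewrite nchains_naccepted natr_sum.
under eq_bigr do rewrite naccepted_transfer.
rewrite -[LHS]/(entry_sum (chain_mx k ^+ m)).
have -> : chain_mx k = k.+1%:R *: 1 + chain_nil k by rewrite scalemx1 addrC subrK.
rewrite exprDn_comm; last exact: comm_alg.
under eq_bigr do rewrite exprZn expr1n -scalerAl mul1r -scaler_nat scalerA mulrC.
pose F j := k.+1%:R ^+ (m - j) * 'C(m, j)%:R * chain_coef k j.
rewrite entry_sum_comb (@eq_sum_ord_trunc _ F m.+1 k.+1) // => j lt_j.
  by rewrite /F bin_small ?mulr0 ?mul0r.
by rewrite /F chain_coef_gt ?mulr0.
Qed.

Definition ffact_pred_poly j : {poly rat} := \prod_(0 <= t < j) ('X - t.+1%:R%:P).

Lemma size_ffact_pred_poly j : size (ffact_pred_poly j) = j.+1.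
Proof. by rewrite size_prod_XsubC size_iota subn0. Qed.

Lemma ffact_pred_poly_eval m j : (ffact_pred_poly j).[m.+1%:R] = (m ^_ j)%:R.
Proof.
elim: j => [|j IHj]; first by rewrite /ffact_pred_poly big_geq ?hornerC.
rewrite /ffact_pred_poly big_nat_recr //= hornerM -/(ffact_pred_poly j) IHj ffactnSr natrM.
case: (leqP j m) => [le_jm | /ffact_small ->]; last by rewrite !mul0r.
by rewrite hornerXsubC -natrB ?ltnS ?subSS.
Qed.

Definition chains_poly k : {poly rat} :=
  \sum_(j < k.+1) (k.+1%:R ^+ (k - j) * chain_coef k j / j`!%:R) *: ffact_pred_poly j.

Lemma chains_poly_eval k m : (chains_poly k).[m.+1%:R] =
  \sum_(j < k.+1) k.+1%:R ^+ (k - j) * 'C(m, j)%:R * chain_coef k j.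
Proof.
rewrite horner_sum; apply: eq_bigr => j _.
rewrite hornerZ ffact_pred_poly_eval -bin_ffact natrM.
have : j`!%:R != 0 :> rat by rewrite pnatr_eq0 -lt0n fact_gt0.
by move=> ?; field.
Qed.

Lemma chains_poly_monic k : chains_poly k \is monic /\ size (chains_poly k) = k.+1.
Proof.
rewrite /chains_poly big_ord_recr /= subnn expr0 mul1r chain_coef_top divff; last first.
  by rewrite pnatr_eq0 -lt0n fact_gt0.
set low := \sum_(j < k) _.
have size_low : (size low < size (ffact_pred_poly k))%N.
  rewrite size_ffact_pred_poly ltnS (leq_trans (size_sum _ _ _)) //.
  apply/bigmax_leqP => j _.
  by rewrite (leq_trans (size_scale_leq _ _)) // size_ffact_pred_poly.
have monic_top : ffact_pred_poly k \is monic by exact: monic_prod_XsubC.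
rewrite scale1r; split; first by rewrite monicE lead_coefDr -?monicE.
by rewrite addrC size_polyDl // size_ffact_pred_poly.
Qed.

Lemma nchains_chains_poly k m :
  (nchains m.+1 k)%:R = k.+1%:R ^ (m.+1%:Z - k.+1%:Z) * (chains_poly k).[m.+1%:R].
Proof.
rewrite nchains_binomial chains_poly_eval mulr_sumr; apply: eq_bigr => j _.
case: (leqP j m) => [jm | /bin_small ->]; last by rewrite !(mulr0, mul0r).
by rewrite !mulrA expfz_shift ?pnatr_eq0 // -ltnS.
Qed.

Theorem proposition3p7 (k : nat) (hk : (1 <= k)%N) :
  exists P : {poly rat},
    P \is monic /\ size P = k.+1 /\
    forall n : nat, (2 <= n)%N ->
      nchains n k = (\sum_(i < k.+1) zeta n k i)%N /\
      ((\sum_(i < k.+1) zeta n k i)%:R : rat)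
        = (k.+1%:R : rat) ^ (n%:Z - k.+1%:Z)%R * P.[n%:R].
Proof.
exists (chains_poly k); have [P_monic P_size] := chains_poly_monic k.
do 2!split=> //; case=> // m _.
by rewrite -nchains_zeta nchains_chains_poly.
Qed.
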